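(* Let $X$ be a $T_1$ space and $\mathcal{P}$ an ideal of closed subsets of $X$. Then $C(X)_\mathcal{P}$ is a regular ring (for every $f$ there is $g$ with $f=f^2g$) if and only if for every $Z\in Z_\mathcal{P}[X]$ there exists $P\in\mathcal{P}$ such that $Z\setminus P$ is a clopen subset of the subspace $X\setminus P$.
   Context: An ideal of closed subsets of $X$ is a family $\mathcal{P}$ of closed subsets closed under finite unions and under passing to closed subsets. $D_f$ is the set of discontinuity points of $f\in\mathbb{R}^X$; $C(X)_\mathcal{P}=\{f\in\mathbb{R}^X\colon\overline{D_f}\in\mathcal{P}\}$ with pointwise operations. For $f\in C(X)_\mathcal{P}$, $Z_\mathcal{P}(f)=\{x\colon f(x)=0\}$ and $Z_\mathcal{P}[X]$ is the set of all such zero sets. *)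

From HB Require Import structures.
From mathcomp Require Import all_boot all_order all_algebra.
From mathcomp Require Import all_classical all_reals all_analysis.
Set Implicit Arguments. Unset Strict Implicit. Unset Printing Implicit Defensive.
Import Order.TTheory GRing.Theory Num.Theory.
Import numFieldNormedType.Exports.
Local Open Scope classical_set_scope.
Local Open Scope ring_scope.

Definition closed_ideal {X : topologicalType} (P : set (set X)) : Prop :=
  [/\ (forall A, P A -> closed A),
      P set0,
      (forall A B, P A -> P B -> P (A `|` B)) &
      (forall A B, P A -> closed B -> B `<=` A -> P B)].

Definition discont {X : topologicalType} {R : realType} (f : X -> R) : set X :=
  [set x | ~ {for x, continuous f}].

Definition in_CP {X : topologicalType} {R : realType}
  (P : set (set X)) (f : X -> R) : Prop :=
  P (closure (discont f)).

Definition CP_regular {X : topologicalType} {R : realType}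
  (P : set (set X)) : Prop :=
  forall f : X -> R, in_CP P f ->
    exists g : X -> R, in_CP P g /\ f = (f \* f) \* g.

Definition zero_set {X : Type} {R : realType} (f : X -> R) : set X :=
  [set x | f x = 0].

Definition zero_sets_P {X : topologicalType} {R : realType}
  (P : set (set X)) : set (set X) :=
  [set Z | exists f : X -> R, in_CP P f /\ Z = zero_set f].

Definition clopen_in {X : topologicalType} (S D : set X) : Prop :=
  (exists U : set X, open U /\ S = U `&` D) /\
  (exists C : set X, closed C /\ S = C `&` D).

From mathcomp Require Import all_boot all_order all_algebra.
From mathcomp Require Import all_classical all_reals all_analysis.
Set Implicit Arguments. Unset Strict Implicit.
Local Open Scope classical_set_scope.
Local Open Scope ring_scope.
Import Order.TTheory GRing.Theory Num.Theory.
Import numFieldNormedType.Exports.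

(** If [f = f^2 g] with [f], [g] continuous off some [A] in [P], then
    [e = f g] is idempotent, hence [{0,1}]-valued, continuous off [A], and has
    the same zero set as [f]; so [Z(f) \ A] is [{e < 1/2} \ A] and its
    complement in [X \ A] is [{e > 1/2} \ A], both open in [X \ A].
    Conversely take [g = 1/f] (with [1/0 = 0]).  If [Z(f) \ A] is open in
    [X \ A], then off [A] and the discontinuities of [f] the function [g] is
    locally [0] at a zero of [f] and locally [1/f] elsewhere, so [g] is
    continuous off a member of [P]. *)

Section RegularElement.
Variables (X : Type) (R : fieldType).
Implicit Types f g : X -> R.

Lemma regular_mul_idem f g : f = f \* f \* g -> (f \* g) \* (f \* g) = f \* g.
Proof.
move=> fE; apply: funext => x /=.
have fxE : f x = f x * f x * g x := congr1 (fun k => k x) fE.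
by rewrite mulrACA mulrA -fxE.
Qed.

Lemma regular_inv f : f = f \* f \* (fun x => (f x)^-1).
Proof.
apply: funext => x /=.
have [->|fx_neq0] := eqVneq (f x) 0; first by rewrite !mul0r.
by rewrite mulfK.
Qed.

End RegularElement.

Lemma regular_zero_set_mul (X : Type) (R : realType) (f g : X -> R) :
  f = f \* f \* g -> zero_set (f \* g) = zero_set f.
Proof.
move=> fE; apply/seteqP; split => x; rewrite /zero_set /=.
  have fxE : f x = f x * f x * g x := congr1 (fun k => k x) fE.
  by move=> e0; rewrite fxE -mulrA e0 mulr0.
by move->; rewrite mul0r.
Qed.

Section ContinuousOff.
Variables (R : realType) (X : topologicalType).
Implicit Types (f e : X -> R) (A U : set X).

Lemma continuous_at_near_eq f (g : X -> R) (x : X) :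
  (\near x, f x = g x) -> {for x, continuous f} -> {for x, continuous g}.
Proof.
move=> fg cf; rewrite /prop_for /continuous_at -(nbhs_singleton fg).
by apply: cvg_trans cf; apply: near_eq_cvg; near=> y; rewrite (near fg y).
Unshelve. all: by end_near.
Qed.

Lemma continuous_off_closure_discont f (x : X) :
  ~ closure (discont f) x -> {for x, continuous f}.
Proof. by move=> ncl; apply: contrapT => dx; apply/ncl/subset_closure. Qed.

Lemma open_setC_preimage A e (V : set R) :
  closed A -> open V -> (forall x, ~ A x -> {for x, continuous e}) ->
  open (~` A `&` e @^-1` V).
Proof.
move=> cA oV ce; rewrite openE => x [nAx Vex].
apply: filterI; first exact: open_nbhs_nbhs (conj (closed_openC cA) nAx).
exact: ce nAx _ (open_nbhs_nbhs (conj oV Vex)).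
Qed.

Lemma idem_zero_set_clopen_in e A :
  closed A -> (forall x, ~ A x -> {for x, continuous e}) -> e \* e = e ->
  clopen_in (zero_set e `\` A) (~` A).
Proof.
move=> cA ce ee.
have e01 x : e x = 0 \/ e x = 1.
  have exE : e x * e x = e x := congr1 (fun k => k x) ee.
  have : e x * (e x - 1) == 0 by rewrite mulrBr mulr1 exE subrr.
  by rewrite mulf_eq0 subr_eq0 => /orP[] /eqP; [left | right].
have half_gt0 : 0 < 2^-1 :> R by rewrite invr_gt0.
have half_lt1 : 2^-1 < 1 :> R by rewrite invf_lt1 // ltr1n.
split.
- exists (~` A `&` e @^-1` [set r | r < 2^-1]).
  split; first by apply: open_setC_preimage => //; exact: open_lt.
  apply/seteqP; split => x; rewrite /zero_set /=; first by move=> [-> nAx].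
  move=> [[nAx ex] _].
  by case: (e01 x) ex => -> //; rewrite ltNge (ltW half_lt1).
- exists (~` (~` A `&` e @^-1` [set r | 2^-1 < r])).
  split.
    by rewrite closedC; apply: open_setC_preimage => //; exact: open_gt.
  apply/seteqP; split => x; rewrite /zero_set /=.
    by move=> [ex0 nAx]; split=> // -[_]; rewrite ex0 ltNge (ltW half_gt0).
  move=> [ngt nAx]; split=> //; case: (e01 x) => // ex1.
  by exfalso; apply: ngt; rewrite ex1.
Qed.

Lemma continuous_inv_off_open_zero_set f A U (x : X) :
  closed A -> open U -> zero_set f `\` A = U `&` ~` A ->
  ~ A x -> {for x, continuous f} -> {for x, continuous (fun y => (f y)^-1)}.
Proof.
move=> cA oU ZU nAx cf; have [fx0|fx_neq0] := eqVneq (f x) 0.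
- have UAx : (U `&` ~` A) x by rewrite -ZU.
  have nUA : \near x, (U `&` ~` A) x.
    exact: open_nbhs_nbhs (conj (openI oU (closed_openC cA)) UAx).
  apply: (continuous_at_near_eq (f := fun=> 0)); last exact: cst_continuous.
  by apply: filterS nUA => y; rewrite -ZU => -[/= ->]; rewrite invr0.
- by apply: cvgV.
Qed.

End ContinuousOff.

Lemma in_CP_continuous_off (R : realType) (X : topologicalType)
    (P : set (set X)) (f : X -> R) (A : set X) :
  closed_ideal P -> P A -> (forall x, ~ A x -> {for x, continuous f}) ->
  in_CP P f.
Proof.
move=> [Pcl _ _ PS] PA cf; apply: (PS _ _ PA (@closed_closure _ _)).
rewrite [B in _ `<=` B](closure_id A).1; last exact: Pcl PA.
by apply: closureS => x dx; apply: contrapT => /cf.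
Qed.

Theorem theorem6p4 (R : realType) (X : topologicalType) (P : set (set X)) :
  accessible_space X -> closed_ideal P ->
  (@CP_regular X R P <->
   forall Z, @zero_sets_P X R P Z ->
     exists A, P A /\ clopen_in (Z `\` A) (~` A)).
Proof.
move=> _ hP; have [Pcl _ PU _] := hP; split.
- move=> reg _ [f [Pf ->]]; have [g [Pg fE]] := reg f Pf.
  exists (closure (discont f) `|` closure (discont g)); split; first exact: PU.
  rewrite -(regular_zero_set_mul fE).
  apply: idem_zero_set_clopen_in; last exact: regular_mul_idem.
    by apply: closedU; exact: closed_closure.
  move=> x /not_orP[ncf ncg].
  by apply: cvgM; exact: continuous_off_closure_discont.
- move=> clZ f Pf; exists (fun x => (f x)^-1); split; last exact: regular_inv.
  have [A [PA [[U [oU ZU]] _]]] := clZ _ (ex_intro _ f (conj Pf erefl)).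
  apply: (in_CP_continuous_off hP (PU _ _ PA Pf)) => x /not_orP[nAx ncf].
  apply: continuous_inv_off_open_zero_set oU ZU nAx _ => //; first exact: Pcl.
  exact: continuous_off_closure_discont.
Qed.
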